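(* Let $P$ and $Q$ be diassociative loops and let $f:P\to Q$ be a half-isomorphism. Then $f(C(P))=C(Q)$, where $C(L)=\{c\in L: cx=xc \text{ for all } x\in L\}$ denotes the commutant of a loop $L$.
   Context: A loop is diassociative if any two of its elements generate a group. For loops $(L,\ast)$ and $(L',\cdot)$, a bijection $f:L\to L'$ is a half-isomorphism if $f(x\ast y)\in\{f(x)\cdot f(y),\,f(y)\cdot f(x)\}$ for all $x,y\in L$. *)

From Stdlib Require Import ssreflect ssrfun.

Record loop := Loop {
  carrier :> Type;
  lop : carrier -> carrier -> carrier;
  lunit : carrier;
  lop_1x : forall x, lop lunit x = x;
  lop_x1 : forall x, lop x lunit = x;
  lop_ldiv : forall a b, exists! x, lop a x = b;
  lop_rdiv : forall a b, exists! y, lop y a = b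
}.

Arguments lop {l}.
Arguments lunit {l}.

Definition is_subloop (L : loop) (S : L -> Prop) : Prop :=
  S lunit /\
  (forall a b, S a -> S b -> S (lop a b)) /\
  (forall a b x, S a -> S b -> lop a x = b -> S x) /\
  (forall a b y, S a -> S b -> lop y a = b -> S y).

Definition gen2 (L : loop) (x y : L) : L -> Prop :=
  fun z => forall S : L -> Prop, is_subloop L S -> S x -> S y -> S z.

(* A loop is diassociative if any two elements generate a group, i.e. the
   subloop they generate is associative (an associative loop is a group). *)
Definition diassociative (L : loop) : Prop :=
  forall x y : L, forall a b c : L,
    gen2 L x y a -> gen2 L x y b -> gen2 L x y c ->
    lop (lop a b) c = lop a (lop b c).

Definition half_isomorphism (P Q : loop) (f : P -> Q) : Prop :=
  bijective f /\
  forall x y : P, f (lop x y) = lop (f x) (f y) \/ f (lop x y) = lop (f y) (f x).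

Definition commutant (L : loop) (c : L) : Prop :=
  forall x : L, lop c x = lop x c.

From Stdlib Require Import ssreflect ssrfun.

(* A half-isomorphism sends commuting pairs to commuting pairs:
   if xy = yx in P, put a = f x, b = f y, so that f(y^-1) = b^-1 and the
   identities (xy)(xy^-1) = x^2 and (xy^-1)y^2 = xy of P are carried to Q,
   up to the order of each product, where they force ab = ba inside the group
   generated by a and b.  Up to passing to the opposite loop of Q we may
   assume f(xy) = ab.  Conversely, if f c is central in Q then f(cx) and f(xc)
   both lie in {f c f x, f x f c}, a singleton, so c is central by injectivity. *)

Local Notation "x * y" := (lop x y).

Section Loops.
Context {L : loop}.

Lemma lop_cancel_l (a u v : L) : a * u = a * v -> u = v.
Proof.
move=> E; case: (lop_ldiv L a (a * u)) => w [_ U].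
by rewrite -(U u) // (U v).
Qed.

Lemma lop_cancel_r (a u v : L) : u * a = v * a -> u = v.
Proof.
move=> E; case: (lop_rdiv L a (u * a)) => w [_ U].
by rewrite -(U u) // (U v).
Qed.

Lemma gen2_l (x y : L) : gen2 L x y x. Proof. by move=> S _ Sx. Qed.
Lemma gen2_r (x y : L) : gen2 L x y y. Proof. by move=> S _ _ Sy. Qed.

Lemma gen2_mul (x y u v : L) :
  gen2 L x y u -> gen2 L x y v -> gen2 L x y (u * v).
Proof.
move=> Gu Gv S HS Sx Sy; have [_ [Smul _]] := HS.
by apply: Smul; [apply: Gu | apply: Gv].
Qed.

Lemma gen2_rinv {x y u v : L} : gen2 L x y u -> u * v = lunit -> gen2 L x y v.
Proof.
move=> Gu E S HS Sx Sy; have [S1 [_ [Sldiv _]]] := HS.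
by apply: (Sldiv u lunit) => //; apply: Gu.
Qed.

End Loops.

#[local] Hint Resolve gen2_l gen2_r gen2_mul : gen2.

Definition opp_loop (L : loop) : loop :=
  Loop L (fun x y => y * x) lunit (lop_x1 L) (lop_1x L) (lop_rdiv L) (lop_ldiv L).

Lemma is_subloop_opp {L : loop} (S : L -> Prop) :
  is_subloop L S -> is_subloop (opp_loop L) S.
Proof.
move=> [S1 [Smul [Sldiv Srdiv]]]; split=> //; split.
- by move=> a b Sa Sb; apply: Smul.
- by split=> [a b x | a b y] Sa Sb E; [apply: (Srdiv a b) | apply: (Sldiv a b)].
Qed.

Lemma gen2_opp {L : loop} (x y z : L) : gen2 (opp_loop L) x y z -> gen2 L x y z.
Proof. by move=> G S HS; apply: G; apply: is_subloop_opp. Qed.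

Lemma diassociative_opp {L : loop} : diassociative L -> diassociative (opp_loop L).
Proof.
move=> D x y a b c Ga Gb Gc /=.
by rewrite (D x y c b a) //; apply: gen2_opp.
Qed.

Definition half_hom (P Q : loop) (f : P -> Q) : Prop :=
  forall x y : P, f (x * y) = f x * f y \/ f (x * y) = f y * f x.

Lemma half_hom_opp {P Q : loop} {f : P -> Q} :
  half_hom P Q f -> half_hom P (opp_loop Q) f.
Proof. by move=> f_half x y; case: (f_half x y); [right | left]. Qed.

Section Diassociative.
Context {L : loop} (DL : diassociative L).

Lemma diassoc_linv {u v : L} : u * v = lunit -> v * u = lunit.
Proof.
move=> E; apply: (lop_cancel_r v); rewrite lop_1x.
by rewrite (DL u v v u v) ?E ?lop_x1; auto with gen2.
Qed.

Section Pair.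
Variable a : L.
Context {b b' : L}.
Hypothesis bb' : b * b' = lunit.

Let b'b : b' * b = lunit := diassoc_linv bb'.
Let gen_b' : gen2 L a b b' := gen2_rinv (gen2_r a b) bb'.
#[local] Hint Resolve gen_b' : gen2.
Let assoc u v w : gen2 L a b u -> gen2 L a b v -> gen2 L a b w ->
  (u * v) * w = u * (v * w) := DL a b u v w.
Local Ltac assoc_rw := rewrite ?assoc; try solve [auto with gen2].

Lemma commute_mul_rinv : a * b = b * a -> (a * b) * (a * b') = a * a.
Proof.
move=> ab_ba; assoc_rw; rewrite -(assoc b a b'); auto with gen2.
by rewrite -ab_ba; assoc_rw; rewrite bb' lop_x1.
Qed.

Lemma mul_rinv_sq : (a * b') * (b * b) = a * b.
Proof.
assoc_rw; rewrite -(assoc b' b b); auto with gen2.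
by rewrite b'b lop_1x.
Qed.

Lemma commute_of_mul_rinv :
  (a * b) * (a * b') = a * a \/ (a * b') * (a * b) = a * a -> a * b = b * a.
Proof.
case=> E; move: E; rewrite assoc; auto with gen2; move/lop_cancel_l => E.
- by rewrite -{1}E; assoc_rw; rewrite b'b lop_x1.
- by rewrite -{2}E -(assoc b b'); auto with gen2; rewrite bb' lop_1x.
Qed.

Lemma commute_of_rinv_mul_sq :
  (b' * a) * (b * b) = a * b \/ (b * b) * (b' * a) = a * b -> a * b = b * a.
Proof.
case=> E.
- move: E; rewrite -(assoc (b' * a) b b); auto with gen2; move/lop_cancel_r => E.
  rewrite -{2}E; assoc_rw; rewrite -(assoc b b'); auto with gen2.
  by rewrite bb' lop_1x.
- by rewrite -E; assoc_rw; rewrite -(assoc b b' a); auto with gen2; rewrite bb' lop_1x.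
Qed.

End Pair.
End Diassociative.

Section HalfHom.
Context {P Q : loop} {f : P -> Q}.
Hypothesis (DP : diassociative P) (DQ : diassociative Q).
Hypothesis f_half : half_hom P Q f.

Lemma half_hom_unit : f lunit = lunit.
Proof.
apply: (lop_cancel_l (f lunit)); rewrite lop_x1.
by case: (f_half lunit lunit); rewrite lop_x1.
Qed.

Lemma half_hom_sq (x : P) : f (x * x) = f x * f x.
Proof. by case: (f_half x x). Qed.

Lemma half_hom_rinv {y y' : P} : y * y' = lunit -> f y * f y' = lunit.
Proof.
move=> yy'; case: (f_half y y'); rewrite yy' half_hom_unit => E; first by rewrite -E.
by apply: (diassoc_linv DQ); rewrite -E.
Qed.

Lemma half_hom_commute_of_morph {x y : P} :
  x * y = y * x -> f (x * y) = f x * f y -> f x * f y = f y * f x.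
Proof.
move=> xy_yx Fxy; case: (lop_ldiv P y lunit) => y' [yy' _].
have bb' := half_hom_rinv yy'.
have R1 := f_half (x * y) (x * y').
rewrite (commute_mul_rinv DP x yy' xy_yx) half_hom_sq Fxy in R1.
have R2 := f_half (x * y') (y * y).
rewrite (mul_rinv_sq DP x yy') half_hom_sq Fxy in R2.
case: (f_half x y') => Fxy'; rewrite Fxy' in R1 R2.
- by apply: (commute_of_mul_rinv DQ (f x) bb'); case: R1 => E; [left | right].
- by apply: (commute_of_rinv_mul_sq DQ (f x) bb'); case: R2 => E; [left | right].
Qed.

End HalfHom.

Section Commutant.
Context {P Q : loop} {f : P -> Q}.
Hypothesis f_half : half_hom P Q f.

Lemma half_hom_commute (DP : diassociative P) (DQ : diassociative Q) (x y : P) :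
  x * y = y * x -> f x * f y = f y * f x.
Proof.
move=> xy_yx; case: (f_half x y) => Fxy.
  exact: half_hom_commute_of_morph.
symmetry; apply: (half_hom_commute_of_morph (Q := opp_loop Q) DP) Fxy => //.
- exact: diassociative_opp.
- exact: half_hom_opp.
Qed.

Lemma commutant_half_hom_image (DP : diassociative P) (DQ : diassociative Q)
    {g : Q -> P} :
  cancel g f -> forall c : P, commutant P c -> commutant Q (f c).
Proof. by move=> gK c Cc q; rewrite -(gK q); apply: half_hom_commute. Qed.

Lemma commutant_half_hom_preimage :
  injective f -> forall c : P, commutant Q (f c) -> commutant P c.
Proof.
move=> f_inj c Cfc x; apply: f_inj.
by case: (f_half c x); case: (f_half x c) => -> ->; rewrite ?Cfc.
Qed.

End Commutant.

Theorem lemma2p4 (P Q : loop) (f : P -> Q) :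
  diassociative P -> diassociative Q -> half_isomorphism P Q f ->
  forall y : Q, commutant Q y <-> exists x : P, commutant P x /\ f x = y.
Proof.
move=> DP DQ [[g fK gK] f_half] y; split.
- move=> Cy; exists (g y); split; last exact: gK.
  by apply: (commutant_half_hom_preimage f_half (can_inj fK)); rewrite gK.
- by move=> [x [Cx <-]]; apply: (commutant_half_hom_image f_half DP DQ gK).
Qed.
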